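(* Let $X$ be a real Banach space and $Y$ a linear subspace of $X$ with norm $\|\cdot\|_Y$ such that $K:=U(Y)=\{g\in Y:\|g\|_Y\le1\}$ is compact in $X$, and let $C_0$ satisfy $\|g\|_X\le C_0\|g\|_Y$ for $g\in Y$. Let $\lambda_1,\dots,\lambda_m\in X^*$ with $\|\lambda_j\|_{X^*}=1$, $f\in K$, $w:=\lambda(f)$, and assume $R(K_w)_X\neq0$. Fix $\alpha>0$, $\beta>0$ and for $\mu>0$ define on $X$ $$\mathcal{L}'_\mu(g):=\|w-\lambda(g)\|^\alpha+\mu\|g\|_Y^\beta .$$ Let $C>2$. Then there is $\mu_0>0$ such that for all $0<\mu\le\mu_0$ the following hold. (a) If $\delta>0$ satisfies $\delta^\alpha\le\mu^2$, $\Sigma\subset X$ satisfies $\operatorname{dist}(K,\Sigma\cap K)_X<\delta$, and $\hat f\in\mathop{\rm argmin}_{g\in\Sigma}\mathcal{L}'_\mu(g)$ is any minimizer, then $\|f-\hat f\|_X\le C\,R(K_w)_X$. (b) If moreover $\epsilon>0$ and $\delta$ satisfy $\epsilon\le\delta^\alpha\le\frac12\mu^2$, $\Sigma$ and $\hat f$ are as in (a), and $\tilde f\in\Sigma$ satisfies $\mathcal{L}'_\mu(\tilde f)\le\mathcal{L}'_\mu(\hat f)+\epsilon$, then $\|f-\tilde f\|_X\le C\,R(K_w)_X$.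
   Context: Convention: $\|g\|_Y:=\infty$ for $g\in X\setminus Y$. $\lambda(g):=(\lambda_1(g),\dots,\lambda_m(g))$; on $\mathbb{R}^m$, $\|v\|:=\big[\frac1m\sum_{j=1}^m|v_j|^2\big]^{1/2}$. For $A,B\subset X$, $\operatorname{dist}(A,B)_X:=\sup_{a\in A}\inf_{b\in B}\|a-b\|_X$. $K_w:=\{h\in K:\lambda(h)=w\}$. For $S\subset X$, $R(S)_X:=\inf\{r:\ S\subset B(z,r)_X\text{ for some }z\in X\}$ (Chebyshev radius). *)

From HB Require Import structures.
From mathcomp Require Import all_boot all_order all_algebra.
From mathcomp Require Import all_classical all_reals all_analysis.
Set Implicit Arguments. Unset Strict Implicit. Unset Printing Implicit Defensive.
Import Order.TTheory GRing.Theory Num.Theory.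
Import numFieldNormedType.Exports.
Local Open Scope classical_set_scope.
Local Open Scope ring_scope.

Definition vnorm (R : realType) (m : nat) (v : 'I_m -> R) : R :=
  Num.sqrt ((m%:R)^-1 * \sum_(j < m) v j ^+ 2).

Definition dual_norm (R : realType) (X : normedModType R) (l : X -> R) : \bar R :=
  ereal_sup [set (`|l x|)%:E | x in [set x : X | `|x| <= 1]].

Definition distX (R : realType) (X : normedModType R) (A B : set X) : \bar R :=
  ereal_sup [set ereal_inf [set (`|a - b|)%:E | b in B] | a in A].

Definition cheb_radius (R : realType) (X : normedModType R) (S : set X) : \bar R :=
  ereal_inf [set r%:E | r in
     [set r : R | exists z : X, forall s, S s -> `|s - z| <= r]].

Definition normYE (R : realType) (X : normedModType R) (Y : set X) (nY : X -> R)
  (g : X) : \bar R := if `[< Y g >] then (nY g)%:E else +oo%E.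

Definition Lmu (R : realType) (X : normedModType R) (m : nat) (Y : set X)
  (nY : X -> R) (lam : 'I_m -> X -> R) (w : 'I_m -> R) (alpha beta mu : R)
  (g : X) : \bar R :=
  if `[< Y g >] then
    ((vnorm (fun j => w j - lam j g)) `^ alpha + mu * (nY g) `^ beta)%:E
  else +oo%E.


(* Comparing with a point of [Sigma `&` K] within [delta] of [f] shows that
   every minimiser, and every [eps]-minimiser, [g] satisfies
   [L'_mu(g) <= mu^2 + mu].  For small [mu] this forces [||w - lambda(g)||]
   to be small and [||g||_Y] to be at most slightly above [1], so the rescaling
   [g'] of [g] into [K] is close to [g] (by [C0]) and has data [lambda(g')]
   close to [w].  By compactness of [K] such a [g'] lies within any prescribed
   [eta] of the fibre [K_w], and any two points of [K_w] are at distance at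
   most [2 R(K_w)]; take [eta = (C - 2) R(K_w)]. *)

From HB Require Import structures.
From mathcomp Require Import all_boot all_order all_algebra.
From mathcomp Require Import all_classical all_reals all_analysis.
From mathcomp Require Import ring lra.
Import Order.TTheory GRing.Theory Num.Theory.
Import numFieldNormedType.Exports.
Local Open Scope classical_set_scope.
Local Open Scope ring_scope.
Set Implicit Arguments. Unset Strict Implicit. Unset Printing Implicit Defensive.

Section DualNormOne.
Variables (R : realType) (X : normedModType R) (l : X -> R).
Hypothesis l_linear : forall a x y, l (a *: x + y) = a * l x + l y.
Hypothesis l_dual_norm : dual_norm l = 1%E.

Let l0 : l 0 = 0.
Proof. by have := l_linear 1 0 0; rewrite scaler0 addr0 mul1r; lra. Qed.

Let lZ a x : l (a *: x) = a * l x.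
Proof. by have := l_linear a x 0; rewrite !addr0 l0 addr0. Qed.

Let lB x y : l (x - y) = l x - l y.
Proof. by have := l_linear (-1) y x; rewrite scaleN1r mulN1r addrC [_ + l x]addrC. Qed.

Lemma dual_norm1_le x : `|l x| <= `|x|.
Proof.
have [->|x0] := eqVneq x 0; first by rewrite l0 normr0.
have nx : 0 < `|x| by rewrite normr_gt0.
have : ((`|l (`|x|^-1 *: x)|)%:E <= dual_norm l)%E.
  apply: ereal_sup_ubound; exists (`|x|^-1 *: x); last reflexivity.
  by rewrite /= normrZ ger0_norm ?invr_ge0 // mulVf ?gt_eqF.
by rewrite l_dual_norm lee_fin lZ normrM ger0_norm ?invr_ge0 // ler_pdivrMl // mulr1.
Qed.

Lemma dual_norm1_lipschitz x y : `|l x - l y| <= `|x - y|.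
Proof. by rewrite -lB dual_norm1_le. Qed.

End DualNormOne.

Lemma vnorm_ge0 (R : realType) m (v : 'I_m -> R) : 0 <= vnorm v.
Proof. exact: sqrtr_ge0. Qed.

Lemma vnorm_le (R : realType) m (v : 'I_m -> R) d :
  0 <= d -> (forall j, `|v j| <= d) -> vnorm v <= d.
Proof.
move=> d0 vd; rewrite -(ger0_norm d0) -sqrtr_sqr /vnorm ler_sqrt ?sqr_ge0 //.
case: m v vd => [|m] v vd; first by rewrite invr0 mul0r sqr_ge0.
rewrite ler_pdivrMl ?ltr0Sn //.
have -> : m.+1%:R * d ^+ 2 = \sum_(j < m.+1) d ^+ 2 by rewrite sumr_const card_ord mulr_natl.
by apply: ler_sum => j _; rewrite -real_normK ?num_real // lerXn2r ?nnegrE.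
Qed.

Lemma normr_le_vnorm (R : realType) m (v : 'I_m -> R) j :
  `|v j| <= Num.sqrt m%:R * vnorm v.
Proof.
have m_gt0 : 0 < m%:R :> R by rewrite ltr0n (leq_ltn_trans _ (ltn_ord j)).
rewrite /vnorm -sqrtrM ?ler0n // mulrA mulfV ?gt_eqF // mul1r -sqrtr_sqr.
rewrite ler_sqrt ?sumr_ge0 // => [|i _]; last exact: sqr_ge0.
by rewrite (bigD1 j) //= lerDl sumr_ge0 // => i _; exact: sqr_ge0.
Qed.

Lemma ler_powR2r (R : realType) (r : R) :
  0 < r -> {in Num.nneg &, {mono (@powR R)^~ r : x y / x <= y}}.
Proof. by move=> r_gt0; apply: le_mono_in; exact: gt0_ltr_powR. Qed.

Lemma cheb_radius_ge0 (R : realType) (X : normedModType R) (S : set X) s :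
  S s -> (0 <= cheb_radius S)%E.
Proof.
move=> Ss; apply/ereal_infP => _ [r [z Sz] <-]; rewrite lee_fin.
exact: le_trans (normr_ge0 _) (Sz s Ss).
Qed.

Lemma cheb_radius_diam (R : realType) (X : normedModType R) (S : set X) s t :
  S s -> S t -> ((2^-1 * `|s - t|)%:E <= cheb_radius S)%E.
Proof.
move=> Ss St; apply/ereal_infP => _ [r [z Sz] <-]; rewrite lee_fin.
have := ler_distD z s t; rewrite [`|z - t|]distrC.
by have := Sz s Ss; have := Sz t St; lra.
Qed.

Lemma cheb_radius_near (R : realType) (X : normedModType R) (S : set X) s
    (C : R) : S s -> 2 < C -> cheb_radius S <> 0%E ->
  exists2 eta : R, 0 < eta & forall x k, S k -> `|x - k| < eta ->
    ((`|s - x|)%:E <= C%:E * cheb_radius S)%E.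
Proof.
move=> Ss C_gt2.
case E : (cheb_radius S) (cheb_radius_ge0 Ss) => [rho| |] // rho_ge0 rho_neq0;
  last by exists 1 => // x k _ _; rewrite muleC gt0_mulye ?leey // lte_fin; lra.
have rho_gt0 : 0 < rho.
  by rewrite lt_def -lee_fin rho_ge0 andbT; apply/eqP => rho0; apply: rho_neq0; rewrite rho0.
exists ((C - 2) * rho) => [|x k Sk xk]; first by rewrite mulr_gt0 // subr_gt0.
have := cheb_radius_diam Ss Sk; rewrite E lee_fin -EFinM lee_fin.
have := ler_distD k s x; rewrite [`|k - x|]distrC.
have : (C - 2) * rho = C * rho - 2 * rho by ring.
lra.
Qed.

Lemma distX_lt (R : realType) (X : normedModType R) (A B : set X) a d :
  A a -> (distX A B < d%:E)%E -> exists2 b, B b & `|a - b| < d.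
Proof.
move=> Aa AB_d.
have /ereal_inf_lt[_ [b Bb <-]] : (ereal_inf [set (`|a - b|)%:E | b in B] < d%:E)%E.
  by apply: le_lt_trans AB_d; apply: ereal_sup_ubound; exists a.
by rewrite lte_fin; exists b.
Qed.

Lemma compact_near_fiber (R : realType) (X : normedModType R) (K : set X) m
    (lam : 'I_m -> X -> R) (w : 'I_m -> R) :
  compact K -> (forall j, continuous (lam j)) -> forall eta, 0 < eta ->
  exists2 c, 0 < c & forall x, K x -> (forall j, `|w j - lam j x| < c) ->
    exists2 k, K k /\ (fun j => lam j k) = w & `|x - k| < eta.
Proof.
move=> K_compact lam_cont eta eta_gt0; apply: contrapT => no_c.
(* Otherwise the sets [P c] form a filter base on [K]; a cluster point lies in
   the fibre, yet every [P c] stays [eta] away from the fibre. *)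
pose P c := [set x | [/\ K x, forall j, `|w j - lam j x| < c &
  forall k, K k /\ (fun j => lam j k) = w -> eta <= `|x - k|]].
have P_neq0 c : 0 < c -> P c !=set0.
  move=> c_gt0; apply: contrapT => P0; apply: no_c; exists c => // x Kx xc.
  apply: contrapT => far; apply: P0; exists x; split => // k Kwk.
  by rewrite leNgt; apply/negP => xk; apply: far; exists k.
pose F := filter_from [set c : R | 0 < c] P.
have F_proper : ProperFilter F.
  apply: filter_from_proper; last exact: P_neq0.
  apply: filter_from_filter; first by exists 1 => /=.
  move=> a b a_gt0 b_gt0; exists (Num.min a b); first by rewrite /= lt_min a_gt0 b_gt0.
  by move=> x [Kx xab far]; split; split=> // j; move: (xab j); rewrite lt_min => /andP[].
have P_in_F c : 0 < c -> F (P c) by exists c.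
have F_K : F K by exists 1 => //= x [].
have [p [Kp p_cluster]] := K_compact F F_proper F_K.
have p_fiber : (fun j => lam j p) = w.
  apply/funext => j; apply: contrapT => /eqP lam_neq.
  have d_gt0 : 0 < `|w j - lam j p| by rewrite normr_gt0 subr_eq0 eq_sym.
  set d := `|w j - lam j p| in d_gt0.
  have d2_gt0 : 0 < d / 2 by rewrite divr_gt0.
  have near_p := lam_cont j p _ (nbhsx_ballx (lam j p) _ d2_gt0).
  have [x [[_ xd _] /= px]] := p_cluster _ _ (P_in_F _ d2_gt0) near_p.
  move: px; rewrite -ball_normE /ball_ /= distrC => px.
  have := ler_distD (lam j x) (w j) (lam j p); have := xd j; rewrite -/d; lra.
have [x [[_ _ far] /= px]] := p_cluster _ _ (P_in_F 1 ltr01) (nbhsx_ballx p _ eta_gt0).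
move: px; rewrite -ball_normE /ball_ /= distrC => px.
by have := far p (conj Kp p_fiber); rewrite leNgt px.
Qed.

Section TikhonovFunctional.
Variables (R : realType) (X : normedModType R) (Y : set X) (nY : X -> R).
Variables (m : nat) (lam : 'I_m -> X -> R) (w : 'I_m -> R) (alpha beta : R).
Hypotheses (alpha_gt0 : 0 < alpha) (beta_gt0 : 0 < beta).

Local Notation L mu := (Lmu Y nY lam w alpha beta mu).
Local Notation UY := [set g | Y g /\ nY g <= 1].

Lemma Lmu_le_of_fit (mu delta : R) g :
  0 <= mu -> 0 <= delta -> Y g -> 0 <= nY g <= 1 ->
  (forall j, `|w j - lam j g| <= delta) -> (L mu g <= (delta `^ alpha + mu)%:E)%E.
Proof.
move=> mu_ge0 delta_ge0 Yg /andP[ng_ge0 ng_le1] fit_g.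
rewrite /Lmu asboolT // lee_fin lerD //.
  by rewrite (ler_powR2r alpha_gt0) ?nnegrE ?vnorm_ge0 // vnorm_le.
have : nY g `^ beta <= 1 `^ beta by rewrite (ler_powR2r beta_gt0) ?nnegrE.
by rewrite powR1; apply: ler_piMr.
Qed.

Lemma Lmu_le_on_net (Sigma : set X) f (mu delta : R) :
  (forall x, Y x -> 0 <= nY x) -> UY f ->
  (forall j g, `|w j - lam j g| <= `|f - g|) -> 0 <= mu -> 0 < delta ->
  (distX UY (Sigma `&` UY) < delta%:E)%E ->
  exists2 g0, Sigma g0 & (L mu g0 <= (delta `^ alpha + mu)%:E)%E.
Proof.
move=> nY_ge0 UYf fit_f mu_ge0 delta_gt0 /(distX_lt UYf)[g0 [Sg0 [Yg0 ng0]] f_g0].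
exists g0 => //; apply: Lmu_le_of_fit => //; first exact: ltW.
  by rewrite nY_ge0.
by move=> j; apply: le_trans (fit_f j g0) (ltW f_g0).
Qed.

Lemma Lmu_sublevel (mu : R) g : 0 < mu -> mu <= 1 ->
  (L mu g <= (mu ^+ 2 + mu)%:E)%E ->
  [/\ Y g, vnorm (fun j => w j - lam j g) `^ alpha <= 2 * mu &
      nY g `^ beta <= 1 + mu].
Proof.
move=> mu_gt0 mu_le1; rewrite /Lmu; case: asboolP => [Yg|_]; last by rewrite leye_eq.
rewrite lee_fin => Lg; split => //.
- have : 0 <= mu * nY g `^ beta by rewrite mulr_ge0 ?powR_ge0 // ltW.
  have : mu ^+ 2 <= mu by rewrite expr2 ler_piMl // ltW.
  by move: Lg; lra.
- rewrite -(ler_pM2l mu_gt0) mulrDr mulr1 -expr2.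
  by move: Lg (powR_ge0 (vnorm (fun j => w j - lam j g)) alpha); lra.
Qed.

Lemma Lmu_sublevel_small (q t : R) : 0 < q -> 0 < t ->
  exists2 mu0 : R, 0 < mu0 & forall mu g, 0 < mu -> mu <= mu0 ->
    (L mu g <= (mu ^+ 2 + mu)%:E)%E ->
    [/\ Y g, vnorm (fun j => w j - lam j g) <= q & nY g <= 1 + t].
Proof.
move=> q_gt0 t_gt0; have t_ge0 := ltW t_gt0.
have powt_gt1 : 1 < (1 + t) `^ beta.
  have : 1 `^ beta < (1 + t) `^ beta.
    by rewrite gt0_ltr_powR ?nnegrE ?ltrDl ?addr_ge0 ?ler01.
  by rewrite powR1.
exists (Num.min 1 (Num.min (q `^ alpha / 2) ((1 + t) `^ beta - 1))).
  by rewrite !lt_min ltr01 divr_gt0 ?powR_gt0 // subr_gt0.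
move=> mu g mu_gt0; rewrite !le_min => /and3P[mu_le1 mu_q mu_t] Lg.
have [Yg fit reg] := Lmu_sublevel mu_gt0 mu_le1 Lg.
split => //.
  rewrite -(ler_powR2r alpha_gt0) ?nnegrE ?vnorm_ge0 ?(ltW q_gt0) //.
  by apply: le_trans fit _; move: mu_q; lra.
have [ng_ge0|ng_lt0] := leP 0 (nY g); last first.
  by rewrite (le_trans (ltW ng_lt0)) // addr_ge0 ?ler01.
rewrite -(ler_powR2r beta_gt0) ?nnegrE ?addr_ge0 ?ler01 //.
by apply: le_trans reg _; move: mu_t; lra.
Qed.

Hypotheses (Y_scale : forall (a : R) x, Y x -> Y (a *: x))
  (nY_scale : forall (a : R) x, Y x -> nY (a *: x) = `|a| * nY x).
Variable C0 : R.
Hypothesis nY_dominates : forall g, Y g -> `|g| <= C0 * nY g.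

Lemma unit_ball_near g (t : R) : Y g -> 0 <= t -> nY g <= 1 + t ->
  exists2 g', UY g' & `|g - g'| <= `|C0| * t.
Proof.
move=> Yg t_ge0 ng_le; have [ng_le1|ng_gt1] := leP (nY g) 1.
  by exists g => //; rewrite subrr normr0 mulr_ge0.
have ng_gt0 : 0 < nY g := lt_trans ltr01 ng_gt1.
have shrink_ge0 : 0 <= 1 - (nY g)^-1 by rewrite subr_ge0 invf_le1 // ltW.
exists ((nY g)^-1 *: g).
  split; first exact: Y_scale.
  by rewrite nY_scale // ger0_norm ?invr_ge0 ?(ltW ng_gt0) // mulVf ?gt_eqF.
rewrite -{1}[g]scale1r -scalerBl normrZ ger0_norm //.
apply: le_trans (ler_wpM2l shrink_ge0 (nY_dominates Yg)) _.
rewrite mulrCA mulrBl mul1r mulVf ?gt_eqF //.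
apply: le_trans (ler_wpM2r _ (real_ler_norm (num_real C0))) _; first by rewrite subr_ge0 ltW.
by rewrite ler_wpM2l // lerBlDl.
Qed.

Hypothesis unit_ball_compact : compact UY.
Hypothesis m_gt0 : (0 < m)%N.
Hypotheses (lam_cont : forall j, continuous (lam j))
  (lam_lipschitz : forall j x y, `|lam j x - lam j y| <= `|x - y|).

Lemma Lmu_sublevel_near_fiber eta : 0 < eta ->
  exists2 mu0 : R, 0 < mu0 & forall mu g, 0 < mu -> mu <= mu0 ->
    (L mu g <= (mu ^+ 2 + mu)%:E)%E ->
    exists2 k, UY k /\ (fun j => lam j k) = w & `|g - k| < eta.
Proof.
move=> eta_gt0; have eta2_gt0 : 0 < eta / 2 by rewrite divr_gt0.
have [c c_gt0 near_fiber] := compact_near_fiber w unit_ball_compact lam_cont eta2_gt0.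
have sqrtm_gt0 : 0 < Num.sqrt m%:R :> R by rewrite sqrtr_gt0 ltr0n.
(* [q] bounds the data misfit and [t] the excess of [nY g] over [1], so that
   both [`|w j - lam j g|] and [`|lam j g - lam j g'|] are at most [c / 3]. *)
pose q := c / (3 * Num.sqrt m%:R).
pose t := Num.min (c / 3) (eta / 2) / (`|C0| + 1).
have t_gt0 : 0 < t by rewrite divr_gt0 ?lt_min ?divr_gt0 ?ltr_wpDl.
have C0t : `|C0| * t <= Num.min (c / 3) (eta / 2).
  rewrite mulrA ler_pdivrMr ?ltr_wpDl // mulrDr mulr1 mulrC lerDl.
  by rewrite ltW // lt_min !divr_gt0.
have q_gt0 : 0 < q by rewrite divr_gt0 // mulr_gt0.
have [mu0 mu0_gt0 small] := Lmu_sublevel_small q_gt0 t_gt0.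
exists mu0 => // mu g mu_gt0 mu_le Lg.
have [Yg fit_q reg_t] := small mu g mu_gt0 mu_le Lg.
have [g' Kg' g_g'] := unit_ball_near Yg (ltW t_gt0) reg_t.
have fit_g' j : `|w j - lam j g'| < c.
  have fit_j : `|w j - lam j g| <= c / 3.
    apply: le_trans (normr_le_vnorm (fun j => w j - lam j g) j) _.
    have -> : c / 3 = Num.sqrt m%:R * q by rewrite /q; field; rewrite gt_eqF.
    by rewrite ler_wpM2l ?sqrtr_ge0.
  have lip_j : `|lam j g - lam j g'| <= c / 3.
    apply: le_trans (lam_lipschitz j g g') _; apply: le_trans g_g' _.
    by apply: le_trans C0t _; rewrite ge_min lexx.
  by have := ler_distD (lam j g) (w j) (lam j g'); lra.
have [k Kwk g'_k] := near_fiber g' Kg' fit_g'.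
exists k => //.
have g_g'_eta : `|g - g'| <= eta / 2.
  by apply: le_trans g_g' (le_trans C0t _); rewrite ge_min lexx orbT.
by have := ler_distD g' g k; lra.
Qed.

End TikhonovFunctional.

Theorem theorem6p2 (R : realType) (X : completeNormedModType R)
  (Y : set X) (nY : X -> R)
  (* Y is a linear subspace of X *)
  (hY0 : Y 0) (hYD : forall x y, Y x -> Y y -> Y (x + y))
  (hYZ : forall (a : R) x, Y x -> Y (a *: x))
  (* nY is a norm on Y *)
  (hn0 : forall x, Y x -> 0 <= nY x)
  (hndef : forall x, Y x -> nY x = 0 -> x = 0)
  (hnZ : forall (a : R) x, Y x -> nY (a *: x) = `|a| * nY x)
  (hnD : forall x y, Y x -> Y y -> nY (x + y) <= nY x + nY y)
  (* K = U(Y) is compact in X *)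
  (hK : compact [set g | Y g /\ nY g <= 1])
  (C0 : R) (hC0 : forall g, Y g -> `|g| <= C0 * nY g)
  (m : nat) (hm : (0 < m)%N) (lam : 'I_m -> X -> R)
  (hlamlin : forall j (a : R) x y, lam j (a *: x + y) = a * lam j x + lam j y)
  (hlamcont : forall j, continuous (lam j))
  (hlamnorm : forall j, dual_norm (lam j) = 1%E)
  (f : X) (hf : Y f /\ nY f <= 1)
  (hR : cheb_radius [set h | (Y h /\ nY h <= 1) /\ (fun j => lam j h) = (fun j => lam j f)]
          <> 0%E)
  (alpha beta : R) (halpha : 0 < alpha) (hbeta : 0 < beta)
  (C : R) (hC : 2 < C) :
  let K := [set g | Y g /\ nY g <= 1] in
  let w := fun j => lam j f in
  let Kw := [set h | K h /\ (fun j => lam j h) = w] in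
  let L := fun mu => Lmu Y nY lam w alpha beta mu in
  exists mu0 : R, 0 < mu0 /\
  forall mu : R, 0 < mu -> mu <= mu0 ->
    (forall (delta : R) (Sigma : set X) (fh : X),
       0 < delta -> delta `^ alpha <= mu ^+ 2 ->
       (distX K (Sigma `&` K) < delta%:E)%E ->
       Sigma fh -> (forall g, Sigma g -> (L mu fh <= L mu g)%E) ->
       ((`|f - fh|)%:E <= C%:E * cheb_radius Kw)%E) /\
    (forall (eps delta : R) (Sigma : set X) (fh ft : X),
       0 < eps -> 0 < delta ->
       eps <= delta `^ alpha -> delta `^ alpha <= 2^-1 * mu ^+ 2 ->
       (distX K (Sigma `&` K) < delta%:E)%E ->
       Sigma fh -> (forall g, Sigma g -> (L mu fh <= L mu g)%E) ->
       Sigma ft -> (L mu ft <= L mu fh + eps%:E)%E ->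
       ((`|f - ft|)%:E <= C%:E * cheb_radius Kw)%E).
Proof.
move=> K w Kw L.
have lam_lipschitz j x y : `|lam j x - lam j y| <= `|x - y|.
  exact: dual_norm1_lipschitz (hlamlin j) (hlamnorm j) x y.
have fKw : Kw f by [].
have [eta eta_gt0 near_Kw] := cheb_radius_near fKw hC hR.
have [mu0 mu0_gt0 near_fiber] := Lmu_sublevel_near_fiber w halpha hbeta
  hYZ hnZ hC0 hK hm hlamcont lam_lipschitz eta_gt0.
have near_f (mu : R) g : 0 < mu -> mu <= mu0 -> (L mu g <= (mu ^+ 2 + mu)%:E)%E ->
    ((`|f - g|)%:E <= C%:E * cheb_radius Kw)%E.
  by move=> mu_gt0 mu_le /(near_fiber mu g mu_gt0 mu_le)[k Kwk]; exact: near_Kw.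
have fit_f j g : `|w j - lam j g| <= `|f - g| := lam_lipschitz j f g.
exists mu0; split => // mu mu_gt0 mu_le; split.
  move=> delta Sigma fh delta_gt0 delta_mu dist_delta Sfh fh_min.
  have [g0 Sg0 Lg0] := Lmu_le_on_net halpha hbeta hn0 hf fit_f (ltW mu_gt0) delta_gt0 dist_delta.
  apply: near_f mu_gt0 mu_le _; apply: le_trans (fh_min g0 Sg0) (le_trans Lg0 _).
  by rewrite lee_fin lerD2r.
move=> eps delta Sigma fh ft eps_gt0 delta_gt0 eps_delta delta_mu dist_delta Sfh fh_min Sft ft_le.
have [g0 Sg0 Lg0] := Lmu_le_on_net halpha hbeta hn0 hf fit_f (ltW mu_gt0) delta_gt0 dist_delta.
apply: near_f mu_gt0 mu_le _; apply: le_trans ft_le _.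
apply: le_trans (leeD2r _ (le_trans (fh_min g0 Sg0) Lg0)) _.
by rewrite -EFinD lee_fin; lra.
Qed.
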